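(* There is an absolute constant $C>0$ such that for every integer $k\ge2$ and every reduced integer of the form $n=2^{a_1}3^{a_2}\cdots p_k^{a_k}$ (with $a_i\ge0$), $$\sum_{1\le i\le k,\ a_i\ge 3}(a_i-2)\le C\,\frac{k^{2/3}}{(\log k)^{1/3}}.$$
   Context: Let $p_i$ denote the $i$-th prime ($p_1=2$). A positive integer $\prod_i p_i^{a_i}$ (with $a_i=0$ for all sufficiently large $i$) is called reduced if $\left\lfloor\frac{a_i+1}{a_j+2}\right\rfloor<\frac{\log p_j}{\log p_i}$ for all $i,j\ne 1$, and $2^{a_1}<8p_j^2$ for every $j$ with $a_j=0$. *)

From mathcomp Require Import all_boot.
From Stdlib Require Import Reals.

Set Implicit Arguments.
Unset Strict Implicit.
Unset Printing Implicit Defensive.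

Lemma exists_prime_above (m : nat) : exists p, (m < p) && prime p.
Proof. have [p Hmp Hp] := prime_above m. by exists p; rewrite Hmp Hp. Qed.

Definition next_prime (m : nat) : nat := ex_minn (exists_prime_above m).

(* pth i = the i-th prime, with pth 1 = 2 (pth 0 = 1 is an unused dummy). *)
Fixpoint pth (i : nat) : nat :=
  match i with
  | 0 => 1
  | i'.+1 => next_prime (pth i')
  end.

(* The integer prod_i p_i^(a i) (a i = 0 for large i) is "reduced", stated on
   its exponent sequence a (indices i >= 1; a 0 is ignored). *)
Definition reduced (a : nat -> nat) : Prop :=
  (forall i j : nat, 2 <= i -> 2 <= j ->
     (INR ((a i).+1 %/ (a j).+2)%N < ln (INR (pth j)) / ln (INR (pth i)))%R)
  /\ (forall j : nat, 1 <= j -> a j = 0 -> 2 ^ (a 1) < 8 * (pth j) ^ 2).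

From mathcomp Require Import all_boot zify.
From Stdlib Require Import Reals Lra.

Set Implicit Arguments.
Unset Strict Implicit.
Unset Printing Implicit Defensive.

(* Since a_(k+1) = 0, reducedness tested against P = p_(k+1) gives
   p_i ^ ((a_i + 1) / 2) < P for 2 <= i and 2 ^ a_1 < 8 P ^ 2, so every exponent
   is O(log P); moreover an index i >= 2 with a_i >= 3 has i ^ 2 < p_i ^ 2 < P.
   Hence at most sqrt P indices contribute and the sum is O(sqrt P * log P).
   A Chebyshev bound finishes: every prime power dividing C(2n, n) is at most 2n,
   so 2 ^ n <= C(2n, n) <= P ^ k whenever 2n < P, which gives P = O(k log P),
   and sqrt P * log P = O(k^(1/2) (log k)^(3/2)) = O(k^(2/3) / (log k)^(1/3)). *)

(* Importing Reals rebinds [^] on nat to [Nat.pow]; restore [expn]. *)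
Local Notation "m ^ n" := (expn m n) : nat_scope.

Lemma next_primeP m : [/\ m < next_prime m, prime (next_prime m)
  & forall q, m < q -> prime q -> next_prime m <= q].
Proof.
rewrite /next_prime; case: ex_minnP => p /andP[mp pp] minp; split=> // q mq pq.
by apply: minp; rewrite mq pq.
Qed.

Lemma pth_prime i : 0 < i -> prime (pth i).
Proof. by case: i => // i _; case: (next_primeP (pth i)). Qed.

Lemma pth_ltnS i : pth i < pth i.+1.
Proof. by case: (next_primeP (pth i)). Qed.

Lemma ltn_pth i : i < pth i.
Proof. by elim: i => // i IH; apply: leq_trans (pth_ltnS i); rewrite ltnS. Qed.

Lemma prime_lt_pth k q : prime q -> q < pth k.+1 ->
  exists2 i, 0 < i <= k & q = pth i.
Proof.
move=> pq; elim: k => [|k IH] qk.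
  by case: (next_primeP 1) => _ _ /(_ q (prime_gt1 pq) pq); rewrite leqNgt qk.
case: (ltngtP q (pth k.+1)) => [/IH [i /andP[i0 ik] ->] | gt | ->].
- by exists i; rewrite ?i0 ?(leqW ik).
- by case: (next_primeP (pth k.+1)) => _ _ /(_ q gt pq); rewrite leqNgt qk.
- by exists k.+1; rewrite ?leqnn.
Qed.

Lemma leq_sum_nat_bounded m n N c (P : pred nat) (F : nat -> nat) :
  m <= N -> (forall i, m <= i -> P i -> i < N /\ F i <= c) ->
  \sum_(m <= i < n | P i) F i <= (N - m) * c.
Proof.
move=> mN bounded.
have short n' : n' <= N -> \sum_(m <= i < n' | P i) F i <= (N - m) * c.
  move=> n'N; apply: (@leq_trans (\sum_(m <= i < n') c)).
    rewrite big_mkcond big_nat_cond [X in _ <= X]big_nat_cond.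
    apply: leq_sum => i /andP[/andP[mi _] _]; case: ifP => // Pi.
    by case: (bounded i mi Pi).
  by rewrite sum_nat_const_nat leq_mul2r leq_sub2r ?orbT.
case: (leqP n N) => [|Nn]; first exact: short.
rewrite (big_cat_nat mN (ltnW Nn)) /= [X in _ + X]big1_seq ?addn0.
  exact: short.
move=> i /andP[Pi]; rewrite mem_index_iota => /andP[Ni _].
by have [] := bounded i (leq_trans mN Ni) Pi; rewrite ltnNge Ni.
Qed.

Lemma expn2_le_central_binomial n : 2 ^ n <= 'C(n.*2, n).
Proof.
elim: n => // n IH.
have sym : 'C(n.*2.+1, n.+1) = 'C(n.*2.+1, n).
  have h : n.*2.+1 - n = n.+1 by rewrite -addnn; lia.
  by rewrite -h bin_sub // -addnn; lia.
have step : 2 ^ n <= 'C(n.*2.+1, n) := leq_trans IH (leq_bin2l _ (leqnSn _)).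
by rewrite doubleS binS sym expnS mul2n -addnn leq_add.
Qed.

Lemma logn_fact_wide p n M : prime p -> n <= M ->
  logn p n`! = \sum_(1 <= j < M.+1) n %/ p ^ j.
Proof.
move=> pp nM; rewrite logn_fact // [RHS](@big_cat_nat _ _ _ n.+1) //=.
rewrite [X in _ = _ + X]big1_seq ?addn0 // => j /andP[_].
rewrite mem_index_iota => /andP[nj _].
by rewrite divn_small // (ltn_trans nj) // ltn_expl // prime_gt1.
Qed.

Lemma expn_logn_central_binomial p n : prime p -> 0 < n ->
  p ^ logn p 'C(n.*2, n) <= n.*2.
Proof.
move=> pp n0; have p1 := prime_gt1 pp.
have n20 : 0 < n.*2 by rewrite double_gt0.
set T := trunc_log p n.*2.
apply: leq_trans (trunc_logP p1 n20); rewrite leq_exp2l //.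
have fact_split : logn p n.*2`! = logn p 'C(n.*2, n) + (logn p n`! + logn p n`!).
  have := bin_fact (leq_addr n n); rewrite -addnn addnK => <-.
  by rewrite !lognM ?muln_gt0 ?fact_gt0 ?bin_gt0 ?leq_addr.
have term j : n.*2 %/ p ^ j <= (n %/ p ^ j + n %/ p ^ j) + (j <= T).
  case: (leqP j T) => jT; first by rewrite -addnn leq_divDl.
  rewrite divn_small //; apply: leq_trans (trunc_log_ltn _ p1) _.
  by rewrite leq_exp2l.
have count : \sum_(1 <= j < n.*2.+1) (j <= T : nat) <= T.
  have := @leq_sum_nat_bounded 1 n.*2.+1 T.+1 1 (fun j => j <= T) (fun=> 1).
  by rewrite -big_mkcond subn1 muln1; apply=> //; lia.
have : \sum_(1 <= j < n.*2.+1) n.*2 %/ p ^ j <=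
       \sum_(1 <= j < n.*2.+1) ((n %/ p ^ j + n %/ p ^ j) + (j <= T)).
  by apply: leq_sum => j _; apply: term.
rewrite !big_split /= -logn_fact // -logn_fact_wide //; lia.
Qed.

Lemma leq_expn_size_primes m B : 0 < m ->
  (forall p, p \in primes m -> p ^ logn p m <= B) -> m <= B ^ size (primes m).
Proof.
move=> m0 bound; rewrite {1}(prod_prime_decomp m0) prime_decompE big_map /=.
rewrite big_seq; apply: (@leq_trans (\prod_(p <- primes m | p \in primes m) B)).
  exact: leq_prod.
by rewrite -big_seq big_const_seq count_predT iter_muln_1.
Qed.

Lemma expn2_le_pth_expn k n : n.*2 < pth k.+1 -> 2 ^ n <= pth k.+1 ^ k.
Proof.
move=> n2P; have P0 : 0 < pth k.+1 := leq_ltn_trans (leq0n _) n2P.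
have [->|n0] := posnP n; first by rewrite expn_gt0 P0.
set C := 'C(n.*2, n).
have C0 : 0 < C by rewrite bin_gt0 -addnn leq_addr.
have prime_pow_le p : p \in primes C -> p ^ logn p C <= n.*2.
  by rewrite mem_primes => /and3P[pp _ _]; apply: expn_logn_central_binomial.
have size_le : size (primes C) <= k.
  have -> : k = size [seq pth i | i <- iota 1 k] by rewrite size_map size_iota.
  apply: uniq_leq_size (primes_uniq C) _ => p pC.
  have pp : prime p by move: pC; rewrite mem_primes => /andP[].
  have [|i /andP[i0 ik] ->] := @prime_lt_pth k p pp.
    apply: leq_ltn_trans n2P; apply: leq_trans (prime_pow_le p pC).
    by rewrite -{1}(expn1 p) leq_exp2l ?prime_gt1 // logn_gt0.
  by rewrite map_f // mem_iota; lia.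
apply: leq_trans (expn2_le_central_binomial n) _.
apply: leq_trans (@leq_expn_size_primes C (pth k.+1) C0 _) _.
  by move=> p /prime_pow_le /leq_trans; apply; apply: ltnW.
by rewrite leq_pexp2l.
Qed.

Section RealBounds.
Local Open Scope R_scope.

Lemma ln_le x y : 0 < x -> x <= y -> ln x <= ln y.
Proof. by move=> x0 [xy|->]; [apply/Rlt_le/ln_increasing | apply: Rle_refl]. Qed.

Lemma exp_le x y : x <= y -> exp x <= exp y.
Proof. by move=> [xy|->]; [apply/Rlt_le/exp_increasing | apply: Rle_refl]. Qed.

Lemma ln_le_affine c x : 0 < c -> 0 < x -> ln x <= ln c + x / c - 1.
Proof.
move=> c0 x0; have xc0 : 0 < x / c by apply: Rdiv_lt_0_compat.
have -> : x = c * (x / c) by field; lra.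
rewrite ln_mult // (_ : c * (x / c) / c = x / c); last by field; lra.
have := exp_ineq1_le (ln (x / c)); rewrite exp_ln //; lra.
Qed.

Lemma one_le_ln x : 3 <= x -> 1 <= ln x.
Proof.
move=> x3; rewrite -[1]ln_exp; apply: ln_le; first exact: exp_pos.
have := exp_le_3; lra.
Qed.

(* With u = ln x and t = ln k, the hypothesis gives u <= ln 5 + t + ln u; bounding
   ln u and ln t by [ln_le_affine] with c = 20 makes everything linear, and the
   coefficient of t obtained on the left, 11/19, is below 2/3 - 1/60. *)
Lemma sqrt_mul_ln_le_growth : exists C, 0 < C /\ forall k x,
  2 <= k -> 3 <= x -> x <= 5 * k * ln x ->
  sqrt x * ln x <= C * (Rpower k (2/3) / Rpower (ln k) (1/3)).
Proof.
exists (exp (4/3 * (ln 20 - 1) + 11/19 * (ln 5 + ln 20 - 1))); split=> [|k x k2 x3 xk].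
  exact: exp_pos.
set u := ln x; set t := ln k.
have u1 : 1 <= u := one_le_ln x3.
have t0 : 0 < t by rewrite /t -ln_1; apply: ln_increasing; lra.
have ut : u <= ln 5 + t + ln u.
  have ln5ku : ln (5 * k * u) = ln 5 + t + ln u by rewrite /t !ln_mult; lra.
  by rewrite -ln5ku; apply: ln_le; rewrite /u; lra.
have lnu := @ln_le_affine 20 u ltac:(lra) ltac:(lra).
have lnt := @ln_le_affine 20 t ltac:(lra) t0.
have lhs : sqrt x * u = exp (/ 2 * u + ln u).
  by rewrite exp_plus exp_ln -?Rpower_sqrt //; lra.
have rhs : Rpower k (2/3) / Rpower t (1/3) = exp (2/3 * t - 1/3 * ln t).
  by rewrite /Rpower /Rminus exp_plus exp_Ropp.
by rewrite lhs rhs -exp_plus; apply: exp_le; lra.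
Qed.

End RealBounds.

Lemma natpowE m n : Nat.pow m n = m ^ n.
Proof. by elim: n => // n IH; rewrite /= IH expnS multE. Qed.

Lemma INR_expn m n : INR (m ^ n) = (INR m ^ n)%R.
Proof. by rewrite -natpowE pow_INR. Qed.

Lemma INR_leq m n : m <= n -> (INR m <= INR n)%R.
Proof. by move/leP; apply: le_INR. Qed.

Lemma ln_le_of_expn_le b m c n : 0 < b -> 0 < c -> b ^ m <= c ^ n ->
  (INR m * ln (INR b) <= INR n * ln (INR c))%R.
Proof.
move=> /ltP/lt_0_INR b0 /ltP/lt_0_INR c0 /INR_leq; rewrite !INR_expn => bc.
by rewrite -!ln_pow //; apply: ln_le bc; apply: pow_lt.
Qed.

Lemma expn_lt_of_ln p P m : 1 < p -> 0 < P ->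
  (INR m < ln (INR P) / ln (INR p))%R -> p ^ m < P.
Proof.
move=> /ltP/lt_1_INR p1 /ltP/lt_0_INR P0 mP.
have lnp : (0 < ln (INR p))%R by rewrite -ln_1; apply: ln_increasing; lra.
have : (ln (INR (p ^ m)) < ln (INR P))%R.
  rewrite INR_expn ln_pow; last lra.
  have -> : ln (INR P) = (ln (INR P) / ln (INR p) * ln (INR p))%R by field; lra.
  exact: Rmult_lt_compat_r.
rewrite ltnNge; apply: contraPN => /INR_leq Pp.
by apply: Rle_not_lt; apply: ln_le.
Qed.

Section ReducedExponents.
Variables (a : nat -> nat) (j : nat).
Hypotheses (red_a : reduced a) (j2 : 2 <= j) (aj0 : a j = 0).

Let pj2 : 2 < pth j := leq_ltn_trans j2 (ltn_pth j).

Lemma reduced_pth_expn_lt i : 2 <= i -> pth i ^ ((a i).+1 %/ 2) < pth j.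
Proof.
move=> i2; have := red_a.1 i j i2 j2; rewrite aj0.
apply: expn_lt_of_ln; last exact: ltnW (ltnW pj2).
by apply: prime_gt1; apply: pth_prime; apply: ltnW.
Qed.

Lemma reduced_exponent_le i : 1 <= i -> 3 <= a i ->
  a i <= (trunc_log 2 (pth j)).*2 + 4.
Proof.
set L := trunc_log 2 (pth j).
have pjL : pth j < 2 ^ L.+1 := trunc_log_ltn _ (isT : 1 < 2).
case: (ltngtP i 1) => // [i2 _ | -> _] ai3.
- set m := (a i).+1 %/ 2.
  have p2 : 2 <= pth i by apply: prime_gt1; apply: pth_prime; apply: ltnW.
  have : 2 ^ m < 2 ^ L.+1.
    apply: leq_ltn_trans _ (ltn_trans (reduced_pth_expn_lt i2) pjL).
    by rewrite leq_exp2r // /m; lia.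
  by rewrite ltn_exp2l // /m; lia.
- have := red_a.2 j (ltnW j2) aj0; rewrite !natpowE => a1.
  have : 8 * pth j ^ 2 < 2 ^ 3 * (2 ^ L.+1) ^ 2 by rewrite ltn_pmul2l // ltn_sqr.
  rewrite -expnM -expnD => /(ltn_trans a1).
  by rewrite ltn_exp2l //; lia.
Qed.

Lemma reduced_index_sq_lt i : 1 <= i -> 3 <= a i -> i * i < pth j.
Proof.
case: (ltngtP i 1) => // [i2 _ | -> _] ai3; last exact: ltnW pj2.
apply: leq_ltn_trans _ (reduced_pth_expn_lt i2).
have m2 : 2 <= (a i).+1 %/ 2 by lia.
apply: leq_trans (leq_pexp2l (prime_gt0 (pth_prime (ltnW i2))) m2).
by rewrite expnS expn1 leq_mul // ltnW // ltn_pth.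
Qed.

End ReducedExponents.

Lemma INR_le_sqrt_mul_ln (s N L P : nat) : 3 <= P -> s <= N * (L.*2 + 2) ->
  N * N <= 4 * P -> 2 ^ L <= P ->
  (INR s <= 12 * sqrt (INR P) * ln (INR P))%R.
Proof.
move=> P3 sN NP LP.
have P3R : (3 <= INR P)%R by have := INR_leq P3; rewrite /=; lra.
have u1 := one_le_ln P3R.
have L2 : (INR L <= 2 * ln (INR P))%R.
  have LP1 : 2 ^ L <= P ^ 1 by rewrite expn1.
  have := ln_le_of_expn_le (isT : 0 < 2) (ltnW (ltnW P3)) LP1.
  rewrite [INR 2]INR_IZR_INZ /=.
  by have := ln_lt_2; have := pos_INR L; move=> *; nra.
have N2 : (INR N <= 2 * sqrt (INR P))%R.
  have := INR_leq NP; rewrite mulnE !mult_INR /= => NPR.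
  have := sqrt_sqrt (INR P) ltac:(lra); have := sqrt_pos (INR P).
  have := pos_INR N; move=> *; nra.
have sR : (INR s <= INR N * (2 * INR L + 2))%R.
  by have := INR_leq sN; rewrite mulnE -addnn addnE !mult_INR !plus_INR /=; lra.
have := pos_INR L; have := sqrt_pos (INR P); move=> *.
apply: (Rle_trans _ _ _ sR).
apply: (Rle_trans _ (2 * sqrt (INR P) * (6 * ln (INR P)))); last lra.
apply: Rmult_le_compat; try lra; exact: pos_INR.
Qed.

Lemma pth_le_k_ln k : 2 <= k ->
  (INR (pth k.+1) <= 5 * INR k * ln (INR (pth k.+1)))%R.
Proof.
move=> k2; set P := pth k.+1; set n := P.-1./2.
have kP : k.+1 < P := ltn_pth k.+1.
have n2P : n.*2 < P by rewrite /n; lia.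
have P3R : (3 <= INR P)%R.
  by have := INR_leq (leq_ltn_trans k2 (ltnW kP)); rewrite /=; lra.
have k2R : (2 <= INR k)%R by have := INR_leq k2; rewrite /=; lra.
have u1 := one_le_ln P3R.
have chebyshev : (INR n * ln 2 <= INR k * ln (INR P))%R.
  have P0 : 0 < P := ltn_trans (ltn0Sn k) kP.
  have := ln_le_of_expn_le (isT : 0 < 2) P0 (expn2_le_pth_expn n2P).
  by rewrite [INR 2]INR_IZR_INZ.
have Pn : (INR P <= 2 * INR n + 2)%R.
  have : P <= n + n + 2 by rewrite /n; lia.
  by move/INR_leq; rewrite !addnE !plus_INR /=; lra.
have := ln_lt_2; have := pos_INR n; move=> *; nra.
Qed.

Lemma excess_sum_le_sqrt_mul_ln k a : 1 <= k -> reduced a -> a k.+1 = 0 ->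
  Rle (INR (\sum_(1 <= i < k.+1 | 3 <= a i) (a i - 2)))
      (12 * sqrt (INR (pth k.+1)) * ln (INR (pth k.+1)))%R.
Proof.
move=> k1 red_a a0; set P := pth k.+1.
have j2 : 2 <= k.+1 := k1.
have P3 : 3 <= P := leq_ltn_trans j2 (ltn_pth k.+1).
set L := trunc_log 2 P; set N := 2 ^ (L./2).+1.
have LP : 2 ^ L <= P := trunc_logP (isT : 1 < 2) (ltnW (ltnW P3)).
have PL : P < 2 ^ L.+1 := trunc_log_ltn _ (isT : 1 < 2).
have NN : N * N = 2 ^ ((L./2).+1 + (L./2).+1) by rewrite expnD.
have PN : P < N * N by rewrite NN; apply: leq_trans PL _; rewrite leq_exp2l //; lia.
have NP : N * N <= 4 * P.
  rewrite NN; apply: (@leq_trans (2 ^ L.+2)); first by rewrite leq_exp2l //; lia.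
  by rewrite !expnS mulnA leq_pmul2l.
apply: INR_le_sqrt_mul_ln P3 _ NP LP.
apply: (@leq_trans ((N - 1) * (L.*2 + 2))); last by rewrite leq_mul2r leq_subr orbT.
apply: leq_sum_nat_bounded => [|i i1 ai3]; first by rewrite expn_gt0.
split.
- by have := reduced_index_sq_lt red_a j2 a0 i1 ai3; nia.
- by have := reduced_exponent_le red_a j2 a0 i1 ai3; rewrite -/P -/L; lia.
Qed.

Theorem lemma3p14 :
  exists C : R, Rlt 0 C /\
    forall (k : nat) (a : nat -> nat),
      2 <= k ->
      (forall i, k < i -> a i = 0) ->
      reduced a ->
      Rle (INR (\sum_(1 <= i < k.+1 | 3 <= a i) (a i - 2)))
          (Rmult C (Rdiv (Rpower (INR k) (2/3)%R) (Rpower (ln (INR k)) (1/3)%R))).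
Proof.
have [C [C0 growth]] := sqrt_mul_ln_le_growth.
exists (12 * C)%R; split=> [|k a k2 a0 red_a]; first lra.
have P3 : (3 <= INR (pth k.+1))%R.
  by have := INR_leq (leq_ltn_trans k2 (ltnW (ltn_pth k.+1))); rewrite /=; lra.
apply: (Rle_trans _ _ _ (excess_sum_le_sqrt_mul_ln (ltnW k2) red_a (a0 _ (ltnSn k)))).
rewrite Rmult_assoc [(12 * C * _)%R]Rmult_assoc; apply: Rmult_le_compat_l; first lra.
apply: growth => //; last exact: pth_le_k_ln.
by have := INR_leq k2; rewrite /=; lra.
Qed.
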